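(* Let $\mathbf Q\in\{0,1\}^{J\times K}$ be a fixed $Q$-matrix with rows $\boldsymbol q_j$, let $\mathcal E$ be an attribute hierarchy on $[K]$ with permissible set $\mathcal A=\mathcal A(\mathcal E)$, and let $\Gamma^{\mathcal A}\in\{0,1\}^{J\times|\mathcal A|}$ be given by $\Gamma^{\mathcal A}_{j,\boldsymbol\alpha}=\mathbb 1(\boldsymbol\alpha\succeq\boldsymbol q_j)$. Suppose: (A) there exist two disjoint item sets $S_1,S_2\subseteq[J]$ such that for $i=1,2$ the submatrix $\Gamma^{(S_i,\mathcal A)}$ (rows in $S_i$) has pairwise distinct columns, and $S_1,S_2$ induce the same partial order on $\mathcal A$, i.e. for all $\boldsymbol\alpha,\boldsymbol\alpha'\in\mathcal A$, $\boldsymbol\alpha\succeq_{S_1}\boldsymbol\alpha'$ iff $\boldsymbol\alpha\succeq_{S_2}\boldsymbol\alpha'$; (B) for any distinct $\boldsymbol\alpha,\boldsymbol\alpha'\in\mathcal A$ with $\boldsymbol\alpha'\succeq_{S_i}\boldsymbol\alpha$ for $i=1$ or $i=2$, there exists an item $j\notin S_1\cup S_2$ with $\Gamma^{\mathcal A}_{j,\boldsymbol\alpha}\neq\Gamma^{\mathcal A}_{j,\boldsymbol\alpha'}$; (C) no column of $\Gamma^{\mathcal A}$ equals any column of $\Gamma^{\mathcal A^c}$, where $\mathcal A^c=\{0,1\}^K\setminus\mathcal A$ and $\Gamma^{\mathcal A^c}_{j,\boldsymbol\alpha}=\mathbb 1(\boldsymbol\alpha\succeq\boldsymbol q_j)$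 for $\boldsymbol\alpha\in\mathcal A^c$. Then the LCBN-based cognitive diagnostic model with hierarchy $\mathcal E$ is strictly identifiable: for any valid parameters $(\boldsymbol\Theta,\boldsymbol t)$ and any alternative $(\bar{\mathcal E},\bar{\boldsymbol\Theta},\bar{\boldsymbol t})$ (same $\mathbf Q$) such that $\bar{\mathcal E}$ has at most $|\mathcal A(\mathcal E)|$ permissible patterns, if $\mathbb P(\mathbf R=\boldsymbol r\mid\mathcal E,\boldsymbol\Theta,\boldsymbol t)=\mathbb P(\mathbf R=\boldsymbol r\mid\bar{\mathcal E},\bar{\boldsymbol\Theta},\bar{\boldsymbol t})$ for all $\boldsymbol r\in\{0,1\}^J$, then $(\mathcal E,\boldsymbol\Theta,\boldsymbol t)=(\bar{\mathcal E},\bar{\boldsymbol\Theta},\bar{\boldsymbol t})$.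
   Context: Attribute hierarchy: a set $\mathcal E$ of prerequisite relations $k\to\ell$ on $[K]$ (all prerequisite relations, so irreflexive, acyclic, transitively closed); $\mathcal A(\mathcal E)=\{\boldsymbol\alpha\in\{0,1\}^K:\alpha_\ell=1\Rightarrow\alpha_k=1\text{ whenever }k\to\ell\in\mathcal E\}$; $\mathrm{pa}(k)=\{\ell:\ell\to k\in\mathcal E\}$. LCBN: with $\boldsymbol t\in(0,1)^K$, $p_{\boldsymbol\alpha}=\prod_{k=1}^K t_k^{\alpha_k\pi_k}(1-t_k)^{(1-\alpha_k)\pi_k}$, $\pi_k=\prod_{\ell\in\mathrm{pa}(k)}\alpha_\ell$ (empty product $1$, $0^0=1$); $p_{\boldsymbol\alpha}=0$ off $\mathcal A(\mathcal E)$. Measurement model: item parameters $\boldsymbol\Theta=(\theta_{j,\boldsymbol\alpha})_{j\in[J],\boldsymbol\alpha\in\mathcal A(\mathcal E)}$, $\theta_{j,\boldsymbol\alpha}=\mathbb P(R_j=1\mid\boldsymbol\alpha)\in(0,1)$, responses conditionally independent given $\boldsymbol\alpha$, and valid parameters satisfy: $\theta_{j,\boldsymbol\alpha}=\theta_{j,\boldsymbol\alpha'}$ whenever $\boldsymbol\alpha\succeq\boldsymbol q_j$ and $\boldsymbol\alpha'\succeq\boldsymbol q_j$, and $\theta_{j,\boldsymbol\alpha}>\theta_{j,\boldsymbol\alpha'}$ whenever $\boldsymbol\alpha\succeq\boldsymbol q_j$ and $\boldsymbol\alpha'\not\succeq\boldsymbol q_j$ ($\succeq$ is componentwise $\ge$).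 Observed distribution: $\mathbb P(\mathbf R=\boldsymbol r)=\sum_{\boldsymbol\alpha\in\mathcal A(\mathcal E)}p_{\boldsymbol\alpha}\prod_j\theta_{j,\boldsymbol\alpha}^{r_j}(1-\theta_{j,\boldsymbol\alpha})^{1-r_j}$. For $S\subseteq[J]$ and $\boldsymbol\alpha,\boldsymbol\alpha'\in\mathcal A$, $\boldsymbol\alpha\succeq_S\boldsymbol\alpha'$ means $\Gamma^{\mathcal A}_{j,\boldsymbol\alpha}\ge\Gamma^{\mathcal A}_{j,\boldsymbol\alpha'}$ for all $j\in S$. *)

From HB Require Import structures.
From mathcomp Require Import all_boot all_order all_algebra.
From mathcomp Require Import reals.
Set Implicit Arguments. Unset Strict Implicit. Unset Printing Implicit Defensive.
Import Order.TTheory GRing.Theory Num.Theory.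
Local Open Scope ring_scope.

Definition pattern (K : nat) := {ffun 'I_K -> bool}.

Definition qmatrix (J K : nat) := 'I_J -> 'I_K -> bool.

(* An attribute hierarchy: the set of prerequisite relations E k l (k -> l);
   irreflexive, acyclic and transitively closed. *)
Definition acyclic_rel (K : nat) (E : rel 'I_K) : Prop :=
  forall (s : seq 'I_K) (k : 'I_K), ~ path E k (rcons s k).

Definition is_hierarchy (K : nat) (E : rel 'I_K) : Prop :=
  [/\ (forall k, ~~ E k k), acyclic_rel E &
      (forall k l m, E k l -> E l m -> E k m)].

Definition permissible (K : nat) (E : rel 'I_K) (a : pattern K) : bool :=
  [forall k, forall l, E k l ==> (a l ==> a k)].

Definition pat_ge (K : nat) (a b : pattern K) : bool := [forall k, b k ==> a k].

Definition Gamma (J K : nat) (Q : qmatrix J K) (j : 'I_J) (a : pattern K) : bool :=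
  [forall k, Q j k ==> a k].

Definition pik (K : nat) (E : rel 'I_K) (a : pattern K) (k : 'I_K) : bool :=
  [forall l, E l k ==> a l].

Definition lcbn_prob (R : realType) (K : nat) (E : rel 'I_K) (t : 'I_K -> R)
    (a : pattern K) : R :=
  if permissible E a then
    \prod_(k < K) (if pik E a k then (if a k then t k else 1 - t k) else 1)
  else 0.

Definition valid_t (R : realType) (K : nat) (t : 'I_K -> R) : Prop :=
  forall k, 0 < t k < 1.

(* Valid item parameters Theta (only the values on A(E) are meaningful). *)
Definition valid_theta (R : realType) (J K : nat) (Q : qmatrix J K)
    (E : rel 'I_K) (Th : 'I_J -> pattern K -> R) : Prop :=
  forall j a b, permissible E a -> permissible E b ->
    [/\ 0 < Th j a < 1,
        (Gamma Q j a -> Gamma Q j b -> Th j a = Th j b) &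
        (Gamma Q j a -> ~~ Gamma Q j b -> Th j b < Th j a)].

Definition resp_prob (R : realType) (J K : nat) (E : rel 'I_K)
    (Th : 'I_J -> pattern K -> R) (t : 'I_K -> R) (r : {ffun 'I_J -> bool}) : R :=
  \sum_(a : pattern K | permissible E a)
     lcbn_prob E t a *
       \prod_(j < J) (if r j then Th j a else 1 - Th j a).

Definition ge_on (J K : nat) (Q : qmatrix J K) (S : {set 'I_J}) (a b : pattern K) : bool :=
  [forall j in S, Gamma Q j b ==> Gamma Q j a].

Definition distinct_cols (J K : nat) (Q : qmatrix J K) (E : rel 'I_K) (S : {set 'I_J}) : Prop :=
  forall a b : pattern K, permissible E a -> permissible E b -> a != b ->
    exists2 j, j \in S & Gamma Q j a != Gamma Q j b.

From HB Require Import structures.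
From mathcomp Require Import all_boot all_order all_algebra.
From mathcomp Require Import reals.
From mathcomp Require Import ring.
Set Implicit Arguments. Unset Strict Implicit. Unset Printing Implicit Defensive.
Import Order.TTheory GRing.Theory Num.Theory.
Local Open Scope ring_scope.

(* Write E_th[w] for the mean of w(R) when the responses R_j are independent
   Bernoulli(th_j), and h_j := Theta_{j,1} for the top mastery probability
   (1 the all-ones pattern).  As Gamma^{(S,A)} has distinct columns, the
   products prod_{j in S, not alpha >= q_j} (R_j - h_j), triangularised along
   the order >=_S, give functionals u_alpha of the S-responses with
   E_{Theta_beta}[u_alpha] = [beta = alpha] on A.  Given an alternative model
   with the same law, independence across the disjoint blocks S1, S2 and the
   remaining items W turns equality of the laws into
     sum_{y in Abar} pbar_y a_{x,y} b_{x',y} E_y[g] = [x = x'] p_x E_x[g]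
   for g depending on W, where a_{x,y}, b_{x,y} are the S1- and S2-duals of x
   evaluated under the alternative class y.  Since |Abar| <= |A|, a and b are
   then inverse matrices, so each alternative class y is, on the S1-items, the
   a_{.,y}-mixture of true classes, all of which agree with y on W.  By (B)
   these classes are pairwise incomparable for >=_S1, and the products above
   show that the mixture has a single component sigma(y); doing the same with
   S2, sigma matches all item parameters and pushes pbar forward to p.  The
   mastery levels, hence the Gamma-columns, of y and sigma(y) then coincide,
   so (C) and the distinct columns force sigma = id.  Hence Abar = A, which
   determines the hierarchy, and the LCBN probabilities on A determine t. *)

Lemma sum_mul_delta (R : pzSemiRingType) (T : finType) (P : pred T) (c : T -> R) x :
  \sum_(g | P g) c g * (x == g)%:R = if P x then c x else 0.
Proof.
case: ifP => Px.
  rewrite (bigD1 x) //= eqxx mulr1 big1 ?addr0 // => g /andP [_ neqgx].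
  by rewrite eq_sym (negbTE neqgx) mulr0.
by rewrite big1 // => g Pg; case: eqP => [eqxg|]; [rewrite eqxg Pg in Px | rewrite mulr0].
Qed.

Definition resp (J : nat) := {ffun 'I_J -> bool}.

Section BernoulliExpectation.
Variables (R : comPzRingType) (J : nat).
Implicit Types (th c : 'I_J -> R) (w : resp J -> R) (S : {set 'I_J}).

Definition bern_pmf th (r : resp J) : R :=
  \prod_(j < J) (if r j then th j else 1 - th j).

Definition bern_exp th w : R := \sum_(r : resp J) w r * bern_pmf th r.

Definition depends_on S w : Prop :=
  forall r r' : resp J, (forall j, j \in S -> r j = r' j) -> w r = w r'.

Lemma eq_bern_exp th w w' : w =1 w' -> bern_exp th w = bern_exp th w'.
Proof. by move=> ww'; apply: eq_bigr => r _; rewrite ww'. Qed.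

Lemma bern_exp_add th w1 w2 :
  bern_exp th (fun r => w1 r + w2 r) = bern_exp th w1 + bern_exp th w2.
Proof. by rewrite /bern_exp -big_split; apply: eq_bigr => r _; rewrite mulrDl. Qed.

Lemma bern_exp_scale th (k : R) w :
  bern_exp th (fun r => k * w r) = k * bern_exp th w.
Proof. by rewrite /bern_exp mulr_sumr; apply: eq_bigr => r _; rewrite -mulrA. Qed.

Lemma bern_exp_sum th (I : finType) (P : pred I) (F : I -> resp J -> R) :
  bern_exp th (fun r => \sum_(i | P i) F i r) = \sum_(i | P i) bern_exp th (F i).
Proof. by rewrite /bern_exp (eq_bigr _ (fun r _ => mulr_suml _ _ _ _)) exchange_big. Qed.

Lemma bern_exp_prod th (P : pred 'I_J) (g : 'I_J -> bool -> R) :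
  bern_exp th (fun r => \prod_(j | P j) g j (r j)) =
  \prod_(j | P j) (g j true * th j + g j false * (1 - th j)).
Proof.
pose G j b := (if P j then g j b else 1) * (if b then th j else 1 - th j).
transitivity (\sum_(r : resp J) \prod_j G j (r j)).
  apply: eq_bigr => r _; rewrite big_mkcond -big_split /=.
  by apply: eq_bigr => j _.
rewrite -(bigA_distr_bigA G) [RHS]big_mkcond; apply: eq_bigr => j _.
by rewrite big_bool /G; case: (P j) => //=; ring.
Qed.

Lemma bern_exp_cst th (k : R) : bern_exp th (fun=> k) = k.
Proof.
rewrite -[k]mulr1 (bern_exp_scale th k (fun=> 1)); congr (_ * _).
by have := bern_exp_prod th pred0 (fun _ _ => 1); rewrite !big_pred0_eq.
Qed.

Lemma bern_exp_centered_prod th c (P : pred 'I_J) :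
  bern_exp th (fun r => \prod_(j | P j) ((r j)%:R - c j)) = \prod_(j | P j) (th j - c j).
Proof.
rewrite (bern_exp_prod th P (fun j b => b%:R - c j)).
by apply: eq_bigr => j _; rewrite /= mulr1n mulr0n; ring.
Qed.

Lemma bern_exp_coord th j : bern_exp th (fun r => (r j)%:R) = th j.
Proof.
have := bern_exp_centered_prod th (fun=> 0) (fun i => i == j).
rewrite big_pred1_eq subr0 => <-.
by apply: eq_bern_exp => r; rewrite big_pred1_eq subr0.
Qed.

Definition mix_resp S (r r' : resp J) : resp J :=
  [ffun j => if j \in S then r j else r' j].

Lemma mix_respK S :
  involutive (fun p : resp J * resp J => (mix_resp S p.1 p.2, mix_resp S p.2 p.1)).
Proof. by case=> r r' /=; congr (_, _); apply/ffunP => j; rewrite !ffunE; case: (j \in S). Qed.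

Lemma bern_pmf_mix th S r r' :
  bern_pmf th (mix_resp S r r') * bern_pmf th (mix_resp S r' r) =
  bern_pmf th r * bern_pmf th r'.
Proof.
rewrite -!big_split; apply: eq_bigr => j _ /=; rewrite !ffunE.
by case: (j \in S) => //; rewrite mulrC.
Qed.

(* Swapping the S-coordinates of two independent response vectors preserves
   their joint law. *)
Lemma bern_exp_mul_indep th S w1 w2 :
  depends_on S w1 -> depends_on (~: S) w2 ->
  bern_exp th (fun r => w1 r * w2 r) = bern_exp th w1 * bern_exp th w2.
Proof.
move=> dep1 dep2; have pmf_sum1 : \sum_(r : resp J) bern_pmf th r = 1.
  by rewrite -[RHS](bern_exp_cst th 1); apply: eq_bigr => r _; rewrite mul1r.
rewrite /bern_exp mulr_suml (eq_bigr _ (fun r _ => mulr_sumr _ _ _ _)) /=.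
rewrite pair_bigA /= (reindex_inj (inv_inj (mix_respK S))) /=.
transitivity (\sum_(p : resp J * resp J)
                (w1 p.1 * w2 p.1 * bern_pmf th p.1) * bern_pmf th p.2).
  rewrite -(pair_bigA _ (fun r r' => w1 r * w2 r * bern_pmf th r * bern_pmf th r')).
  by apply: eq_bigr => r _; rewrite -mulr_sumr pmf_sum1 mulr1.
apply: eq_bigr => -[r r'] _ /=.
rewrite (dep1 (mix_resp S r r') r) => [|j jS]; last by rewrite ffunE jS.
rewrite (dep2 (mix_resp S r' r) r) => [|j]; last by rewrite inE ffunE => /negbTE ->.
by rewrite mulrACA bern_pmf_mix; ring.
Qed.

Lemma depends_onW S S' w : S \subset S' -> depends_on S w -> depends_on S' w.
Proof. by move=> /subsetP sSS' dw r r' eqr; apply: dw => j /sSS'/eqr. Qed.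

Lemma depends_on_cst S (k : R) : depends_on S (fun=> k).
Proof. by []. Qed.

Lemma depends_on_mul S w1 w2 :
  depends_on S w1 -> depends_on S w2 -> depends_on S (fun r => w1 r * w2 r).
Proof. by move=> dep1 dep2 r r' eqr; rewrite (dep1 r r') // (dep2 r r'). Qed.

Lemma depends_on_prod S (P : pred 'I_J) (g : 'I_J -> bool -> R) :
  (forall j, P j -> j \in S) -> depends_on S (fun r => \prod_(j | P j) g j (r j)).
Proof. by move=> sPS r r' eqr; apply: eq_bigr => j /sPS/eqr ->. Qed.

Lemma depends_on_coord S j : j \in S -> depends_on S (fun r => (r j)%:R : R).
Proof. by move=> jS r r' eqr; rewrite eqr. Qed.

End BernoulliExpectation.

Lemma resp_prob_mixture (R : realType) (J K : nat) (E : rel 'I_K)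
    (Th : 'I_J -> pattern K -> R) (t : 'I_K -> R) (w : resp J -> R) :
  \sum_(r : resp J) w r * resp_prob E Th t r =
  \sum_(a | permissible E a) lcbn_prob E t a * bern_exp (Th^~ a) w.
Proof.
rewrite /resp_prob (eq_bigr _ (fun r _ => mulr_sumr _ _ _ _)) exchange_big /=.
apply: eq_bigr => a _; rewrite /bern_exp mulr_sumr.
by apply: eq_bigr => r _; rewrite /bern_pmf; ring.
Qed.

Definition ones (K : nat) : pattern K := [ffun => true].

Lemma permissible_ones (K : nat) (E : rel 'I_K) : permissible E (ones K).
Proof. by apply/forallP => k; apply/forallP => l; rewrite !ffunE !implybT. Qed.

Lemma Gamma_ones (J K : nat) (Q : qmatrix J K) j : Gamma Q j (ones K).
Proof. by apply/forallP => k; rewrite ffunE implybT. Qed.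

Section ValidItemParameters.
Variables (R : realType) (J K : nat) (Q : qmatrix J K) (E : rel 'I_K).
Variable Th : 'I_J -> pattern K -> R.
Hypothesis vTh : valid_theta Q E Th.

Lemma valid_theta_le_ones j a : permissible E a -> Th j a <= Th j (ones K).
Proof.
move=> Aa; have [_ eqTh ltTh] := vTh j (permissible_ones E) Aa.
have [Ga|nGa] := boolP (Gamma Q j a); first by rewrite (eqTh (Gamma_ones Q j) Ga).
by rewrite ltW // ltTh // Gamma_ones.
Qed.

Lemma Gamma_eq_theta_ones j a :
  permissible E a -> Gamma Q j a = (Th j a == Th j (ones K)).
Proof.
move=> Aa; have [_ eqTh ltTh] := vTh j (permissible_ones E) Aa.
have [Ga|nGa] := boolP (Gamma Q j a); first by rewrite (eqTh (Gamma_ones Q j) Ga) eqxx.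
by rewrite lt_eqF // ltTh // Gamma_ones.
Qed.

Lemma centered_prod_neq0 (P : pred 'I_J) g : permissible E g ->
  (\prod_(j | P j) (Th j g - Th j (ones K)) != 0) = [forall j, P j ==> ~~ Gamma Q j g].
Proof.
move=> Ag; apply/prodf_neq0/forallP => [nz j|nG j Pj].
  by apply/implyP => /nz; rewrite subr_eq0 Gamma_eq_theta_ones.
by move: (nG j); rewrite Pj subr_eq0 Gamma_eq_theta_ones.
Qed.

End ValidItemParameters.

Section OrderOnItems.
Variables (J K : nat) (Q : qmatrix J K) (S : {set 'I_J}).

Lemma ge_on_trans a b c : ge_on Q S a b -> ge_on Q S b c -> ge_on Q S a c.
Proof.
move=> /forall_inP geab /forall_inP gebc; apply/forall_inP => j jS.
by apply/implyP => /(implyP (gebc j jS)) /(implyP (geab j jS)).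
Qed.

Lemma ge_on_anti (E : rel 'I_K) a b :
  distinct_cols Q E S -> permissible E a -> permissible E b ->
  ge_on Q S a b -> ge_on Q S b a -> a = b.
Proof.
move=> dcS Aa Ab /forall_inP geab /forall_inP geba; apply/eqP/negPn/negP => neab.
have [j jS] := dcS a b Aa Ab neab; move: (geab j jS) (geba j jS).
by case: (Gamma Q j a); case: (Gamma Q j b).
Qed.

Lemma ge_onE a g :
  ge_on Q S a g = [forall j, ((j \in S) && ~~ Gamma Q j a) ==> ~~ Gamma Q j g].
Proof.
apply/forall_inP/forallP => ge j; last first.
  by move=> jS; move: (ge j); rewrite jS; case: (Gamma Q j a); case: (Gamma Q j g).
by case: (boolP (j \in S)) => //= /ge; case: (Gamma Q j a); case: (Gamma Q j g).
Qed.

End OrderOnItems.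

Definition dual_functional (R : realType) (J K : nat) (E : rel 'I_K)
    (Th : 'I_J -> pattern K -> R) (S : {set 'I_J}) (a : pattern K) (u : resp J -> R) :=
  depends_on S u /\ forall g, permissible E g -> bern_exp (Th^~ g) u = (g == a)%:R.

Section DualFunctionals.
Variables (R : realType) (J K : nat) (Q : qmatrix J K) (E : rel 'I_K).
Variables (Th : 'I_J -> pattern K -> R) (S : {set 'I_J}).
Hypotheses (vTh : valid_theta Q E Th) (dcS : distinct_cols Q E S).

Definition miss_prod (a : pattern K) (r : resp J) : R :=
  \prod_(j | (j \in S) && ~~ Gamma Q j a) ((r j)%:R - Th j (ones K)).

Lemma bern_exp_miss_prod_neq0 a g : permissible E g ->
  (bern_exp (Th^~ g) (miss_prod a) != 0) = ge_on Q S a g.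
Proof. by move=> Ag; rewrite bern_exp_centered_prod (centered_prod_neq0 vTh) // ge_onE. Qed.

Let below a := [set g | permissible E g && ge_on Q S a g && (g != a)].

Lemma below_proper a g : permissible E a -> g \in below a -> below g \proper below a.
Proof.
move=> Aa gba; move: (gba); rewrite inE => /andP [/andP [Ag geag] nega].
apply/properP; split; last by exists g; rewrite // inE eqxx andbF.
apply/subsetP => d; rewrite !inE => /andP [/andP [Ad gegd] _].
rewrite Ad (ge_on_trans geag gegd); apply/eqP => eqda.
by move: gegd nega; rewrite eqda => /(ge_on_anti dcS Aa Ag geag) ->; rewrite eqxx.
Qed.

(* Gaussian elimination along >=_S: the mean of [miss_prod a] already vanishes
   under every pattern not below [a], and the duals of the strictly lower
   patterns remove the rest. *)
Lemma dual_from_below a (ub : pattern K -> resp J -> R) : permissible E a ->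
  (forall g, g \in below a -> dual_functional E Th S g (ub g)) ->
  exists u, dual_functional E Th S a u.
Proof.
move=> Aa dual_ub; pose c g := bern_exp (Th^~ g) (miss_prod a).
have ca_neq0 : c a != 0.
  by rewrite bern_exp_miss_prod_neq0 //; apply/forall_inP => j _; apply/implyP.
exists (fun r => (c a)^-1 * miss_prod a r +
                 \sum_(g in below a) (- ((c a)^-1 * c g)) * ub g r); split.
  have dep_miss : depends_on S (miss_prod a).
    by apply: (depends_on_prod (fun j b => b%:R - Th j (ones K))) => j /andP [].
  move=> r r' eqr; rewrite (dep_miss r r') //; congr (_ + _).
  by apply: eq_bigr => g /dual_ub [dep_ub _]; rewrite (dep_ub r r').
move=> d Ad; rewrite bern_exp_add bern_exp_scale bern_exp_sum -/(c d).
under eq_bigr => g /dual_ub [_ ubd] do rewrite bern_exp_scale ubd //.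
rewrite sum_mul_delta; have [->|neda] := eqVneq d a.
  by rewrite mulVf // inE eqxx andbF addr0.
case: ifP => [_|dNbelow]; first by rewrite subrr.
suff /eqP -> : c d == 0 by rewrite mulr0 addr0.
apply: contraFT dNbelow; rewrite bern_exp_miss_prod_neq0 // => geda.
by rewrite inE Ad geda.
Qed.

Lemma exists_dual a : permissible E a -> exists u, dual_functional E Th S a u.
Proof.
move: {2}#|below a|.+1 (ltnSn #|below a|) => n; elim: n a => // n IH a lt_below Aa.
have dual_below g : exists u, g \in below a -> dual_functional E Th S g u.
  have [gba|] := boolP (g \in below a); last by exists (fun=> 0).
  have Ag : permissible E g by move: gba; rewrite inE => /andP [/andP []].
  have [u dual_u] := IH g (leq_trans (proper_card (below_proper Aa gba)) lt_below) Ag.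
  by exists u.
have [ub dual_ub] := fin_all_exists dual_below.
exact: dual_from_below Aa dual_ub.
Qed.

Lemma exists_dual_family : exists u : pattern K -> resp J -> R,
  forall a, permissible E a -> dual_functional E Th S a (u a).
Proof.
have dual a : exists u, permissible E a -> dual_functional E Th S a u.
  have [Aa|] := boolP (permissible E a); last by exists (fun=> 0).
  by have [u dual_u] := exists_dual Aa; exists u.
exact: fin_all_exists dual.
Qed.

End DualFunctionals.

(* In matrix form: [X *m Y^T = diag d] with at most as many columns as rows
   forces [X] to be square and invertible, hence [Y^T *m diag d^-1 *m X = 1]. *)
Lemma biorthogonal_transpose (R : fieldType) (T : finType) (P1 P2 : pred T)
    (x y : T -> T -> R) (d : T -> R) :
  (#|P2| <= #|P1|)%N -> (forall a, P1 a -> d a != 0) ->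
  (forall a a', P1 a -> P1 a' ->
     \sum_(b | P2 b) x a b * y a' b = if a == a' then d a else 0) ->
  forall b b', P2 b -> P2 b' -> \sum_(a | P1 a) y a b / d a * x a b' = (b == b')%:R.
Proof.
move=> le_card d_neq0 xy_diag b b' P2b P2b'.
pose e1 (i : 'I_#|P1|) := enum_val i; pose e2 (k : 'I_#|P2|) := enum_val k.
have e1P i : P1 (e1 i) by have := enum_valP i.
pose X := \matrix_(i, k) x (e1 i) (e2 k); pose Y := \matrix_(i, k) y (e1 i) (e2 k).
pose D := diag_mx (\row_i d (e1 i)); pose Di := diag_mx (\row_i (d (e1 i))^-1).
have XY : X *m Y^T = D.
  apply/matrixP => i i'; rewrite !mxE.
  transitivity (\sum_(c in P2) x (e1 i) c * y (e1 i') c).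
    by rewrite [RHS]big_enum_val; apply: eq_bigr => k _; rewrite !mxE.
  by rewrite xy_diag ?e1P // (inj_eq enum_val_inj); case: eqP.
have DDi : D *m Di = 1%:M.
  apply/matrixP => i i'; rewrite mul_mx_diag !mxE.
  have [<-|_] := eqVneq i i'; last by rewrite !mulr0n mul0r.
  by rewrite !mulr1n divff // d_neq0.
have [D_unit _] := mulmx1_unit DDi.
have /row_fullP [Z ZX] : row_full X.
  rewrite /row_full eqn_leq rank_leq_col (leq_trans le_card) //.
  by rewrite -[X in (X <= _)%N](mxrank_unit D_unit) -XY mxrankM_maxl.
have YDiX : Y^T *m Di *m X = 1%:M.
  rewrite -ZX -[in LHS](mul1mx Y^T) -ZX -!mulmxA (mulmxA X) XY (mulmxA D) DDi.
  by rewrite mul1mx.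
have [k ->] : exists k, b = e2 k by exists (enum_rank_in P2b b); rewrite /e2 enum_rankK_in.
have [k' ->] : exists k, b' = e2 k by exists (enum_rank_in P2b' b'); rewrite /e2 enum_rankK_in.
move: (congr1 (fun M : 'M[R]_#|P2| => M k k') YDiX); rewrite /= mul_mx_diag !mxE.
rewrite (inj_eq enum_val_inj) => <-; rewrite big_enum_val; apply: eq_bigr => i _.
by rewrite !mxE.
Qed.

Section Recovery.
Variables (R : realType) (J K : nat) (Q : qmatrix J K) (E Eb : rel 'I_K).
Variables (Th Thb : 'I_J -> pattern K -> R) (p pb : pattern K -> R).
Variables (S S' : {set 'I_J}) (u u' : pattern K -> resp J -> R).

Local Notation A := (permissible E).
Local Notation Ab := (permissible Eb).
Local Notation ex x w := (bern_exp (Th^~ x) w).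
Local Notation exb y w := (bern_exp (Thb^~ y) w).
(* [coef x y] is the weight of the true class [x] in the alternative class [y],
   as seen by the [S]-items. *)
Local Notation coef x y := (exb y (u x)).
Local Notation coef' x y := (exb y (u' x)).

Hypothesis vTh : valid_theta Q E Th.
Hypothesis p_gt0 : forall x, A x -> 0 < p x.
Hypothesis pb_gt0 : forall y, Ab y -> 0 < pb y.
Hypothesis card_le : (#|[pred y | Ab y]| <= #|[pred x | A x]|)%N.
Hypothesis disjS : [disjoint S & S'].
Hypothesis dual_u : forall x, A x -> dual_functional E Th S x (u x).
Hypothesis dual_u' : forall x, A x -> dual_functional E Th S' x (u' x).
Hypothesis same_mixture :
  forall w, \sum_(x | A x) p x * ex x w = \sum_(y | Ab y) pb y * exb y w.
Hypothesis separated : forall x x', A x -> A x' -> x != x' -> ge_on Q S x' x ->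
  exists2 j, j \notin S :|: S' & Gamma Q j x != Gamma Q j x'.

Lemma mixture_dual x w : A x -> depends_on (~: S') w ->
  \sum_(y | Ab y) pb y * coef' x y * exb y w = p x * ex x w.
Proof.
move=> Ax dep_w; have [dep_u' u'E] := dual_u' Ax.
have splitE th : bern_exp th (fun r => u' x r * w r) = bern_exp th (u' x) * bern_exp th w.
  exact: bern_exp_mul_indep dep_u' dep_w.
transitivity (\sum_(y | Ab y) pb y * exb y (fun r => u' x r * w r)).
  by apply: eq_bigr => y _; rewrite splitE mulrA.
rewrite -same_mixture (eq_bigr (fun z => p z * ex z w * (x == z)%:R)).
  by rewrite sum_mul_delta Ax.
by move=> z Az; rewrite splitE u'E // eq_sym mulrAC mulrA.
Qed.

Lemma mixture_coupling x x' g : A x -> A x' -> depends_on (~: (S :|: S')) g ->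
  \sum_(y | Ab y) pb y * coef' x' y * (coef x y * exb y g) = (x == x')%:R * p x * ex x g.
Proof.
move=> Ax Ax' dep_g; have [dep_u uE] := dual_u Ax.
have sub_C_S' : S \subset ~: S' by rewrite -disjoints_subset.
have sub_W_CS : ~: (S :|: S') \subset ~: S by rewrite setCS subsetUl.
have sub_W_CS' : ~: (S :|: S') \subset ~: S' by rewrite setCS subsetUr.
have indep th : bern_exp th (fun r => u x r * g r) = bern_exp th (u x) * bern_exp th g.
  exact: bern_exp_mul_indep dep_u (depends_onW sub_W_CS dep_g).
transitivity (\sum_(y | Ab y) pb y * coef' x' y * exb y (fun r => u x r * g r)).
  by apply: eq_bigr => y _; rewrite indep.
rewrite mixture_dual //; last first.
  apply: depends_on_mul; first exact: depends_onW sub_C_S' dep_u.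
  exact: depends_onW sub_W_CS' dep_g.
rewrite indep uE //; have [<-|nexx'] := eqVneq x x'; first by rewrite mulrA [p x * _]mulrC.
by rewrite !(mul0r, mulr0).
Qed.

Lemma coupling_inverse y y' : Ab y -> Ab y' ->
  \sum_(x | A x) coef' x y / p x * (pb y' * coef x y') = (y == y')%:R.
Proof.
apply: (biorthogonal_transpose (P1 := A) (P2 := Ab) (d := p)
         (x := fun x y => pb y * coef x y) (y := fun x y => coef' x y)) => //.
  by move=> x /p_gt0; rewrite lt0r => /andP [].
move=> x x' Ax Ax'; have := mixture_coupling Ax Ax' (depends_on_cst 1).
rewrite bern_exp_cst mulr1 => coupling.
transitivity ((x == x')%:R * p x); last by case: eqP; rewrite /= ?mul1r ?mul0r.
by rewrite -coupling; apply: eq_bigr => z _; rewrite bern_exp_cst mulr1 mulrAC.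
Qed.

Lemma resolve_alternative (f : pattern K -> R) y : Ab y ->
  f y = \sum_(x | A x) (\sum_(y' | Ab y') f y' * coef' x y') / p x * (pb y * coef x y).
Proof.
move=> Ay; transitivity (\sum_(y' | Ab y') f y' * (y == y')%:R).
  by rewrite sum_mul_delta Ay.
transitivity (\sum_(y' | Ab y') \sum_(x | A x) f y' * (coef' x y' / p x * (pb y * coef x y))).
  apply: eq_bigr => y' Ay'; rewrite -mulr_sumr eq_sym coupling_inverse //.
rewrite exchange_big; apply: eq_bigr => x _; rewrite !mulr_suml; apply: eq_bigr => y' _.
by rewrite !mulrA.
Qed.

Lemma recovery_off x y g : A x -> Ab y -> coef x y != 0 ->
  depends_on (~: (S :|: S')) g -> exb y g = ex x g.
Proof.
move=> Ax Ay coef_neq0 dep_g; have pb_coef_neq0 : pb y * coef x y != 0.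
  by rewrite mulf_neq0 // lt0r_neq0 // pb_gt0.
apply: (mulfI pb_coef_neq0); rewrite [RHS]mulrC.
rewrite (resolve_alternative (fun y => pb y * coef x y * exb y g)) //.
rewrite (eq_bigr (fun x' => ex x g * (pb y * coef x' y) * (x == x')%:R)).
  by rewrite sum_mul_delta Ax.
move=> x' Ax'.
have -> : \sum_(y' | Ab y') pb y' * coef x y' * exb y' g * coef' x' y' =
          (x == x')%:R * p x * ex x g.
  by rewrite -mixture_coupling //; apply: eq_bigr => y' _; ring.
have [<-|_] := eqVneq x x'; last by rewrite !(mul0r, mulr0).
by rewrite /=; field; rewrite lt0r_neq0 // p_gt0.
Qed.

Lemma recovery_on y v : Ab y -> depends_on S v ->
  exb y v = \sum_(x | A x) coef x y * ex x v.
Proof.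
move=> Ay dep_v; have pb_neq0 : pb y != 0 by rewrite lt0r_neq0 // pb_gt0.
apply: (mulfI pb_neq0); rewrite (resolve_alternative (fun y => pb y * exb y v)) //.
rewrite mulr_sumr; apply: eq_bigr => x Ax.
have -> : \sum_(y' | Ab y') pb y' * exb y' v * coef' x y' = p x * ex x v.
  rewrite -mixture_dual //; last by apply: depends_onW dep_v; rewrite -disjoints_subset.
  by apply: eq_bigr => y' _; rewrite mulrAC.
by field; rewrite lt0r_neq0 // p_gt0.
Qed.

Section FixedAlternativeClass.
Variable y : pattern K.
Hypothesis Ay : Ab y.

Lemma sum_coef : \sum_(x | A x) coef x y = 1.
Proof.
symmetry; rewrite -[LHS](bern_exp_cst (Thb^~ y)) (recovery_on Ay (depends_on_cst 1)).
by apply: eq_bigr => x _; rewrite bern_exp_cst mulr1.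
Qed.

Lemma coef_support_agree x j : A x -> coef x y != 0 -> j \notin S :|: S' ->
  Thb j y = Th j x.
Proof.
move=> Ax coef_neq0 jNS; have jW : j \in ~: (S :|: S') by rewrite inE.
by have := recovery_off Ax Ay coef_neq0 (depends_on_coord _ jW); rewrite !bern_exp_coord.
Qed.

Lemma coef_support_incomparable x x' : A x -> A x' ->
  coef x y != 0 -> coef x' y != 0 -> x != x' -> ~~ ge_on Q S x' x.
Proof.
move=> Ax Ax' coef_x coef_x' nexx'; apply/negP => gex'x.
have [j jNS] := separated Ax Ax' nexx' gex'x.
rewrite !(Gamma_eq_theta_ones vTh) // -(coef_support_agree Ax coef_x jNS).
by rewrite -(coef_support_agree Ax' coef_x' jNS) eqxx.
Qed.

Lemma coef_centered_prod x1 (P : pred 'I_J) : A x1 -> coef x1 y != 0 ->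
  (forall j, P j -> j \in S) -> (forall j, j \in S -> ~~ Gamma Q j x1 -> P j) ->
  \prod_(j | P j) (Thb j y - Th j (ones K)) =
  coef x1 y * \prod_(j | P j) (Th j x1 - Th j (ones K)).
Proof.
move=> Ax1 coef_x1 PS missP.
have := recovery_on Ay (depends_on_prod (fun j b => b%:R - Th j (ones K)) PS).
rewrite /= bern_exp_centered_prod => ->.
under eq_bigr do rewrite bern_exp_centered_prod.
rewrite (bigD1 x1) //= [X in _ + X]big1 ?addr0 // => x /andP [Ax nexx1].
have [->|coef_x] := eqVneq (coef x y) 0; first by rewrite mul0r.
suff /eqP -> : \prod_(j | P j) (Th j x - Th j (ones K)) == 0 by rewrite mulr0.
apply: contraNT (coef_support_incomparable Ax Ax1 coef_x coef_x1 nexx1).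
rewrite (centered_prod_neq0 vTh) // => /forallP missx; rewrite ge_onE.
by apply/forallP => j; apply/implyP => /andP [jS /(missP j jS) Pj]; apply: (implyP (missx j)).
Qed.

Lemma coef_support_unique x x' : A x -> A x' ->
  coef x y != 0 -> coef x' y != 0 -> x = x'.
Proof.
move=> Ax Ax' coef_x coef_x'; apply/eqP/negPn/negP => nexx'.
pose miss x1 j := (j \in S) && ~~ Gamma Q j x1.
have miss_neq0 x1 : A x1 -> coef x1 y != 0 ->
    \prod_(j | miss x1 j) (Thb j y - Th j (ones K)) != 0.
  move=> Ax1 coef_x1; rewrite (coef_centered_prod (P := miss x1) Ax1 coef_x1).
  - rewrite mulf_neq0 // (centered_prod_neq0 vTh) //.
    by apply/forallP => j; apply/implyP => /andP [].
  - by move=> j /andP [].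
  - by move=> j jS nG; rewrite /miss jS nG.
pose P j := miss x j || miss x' j.
have : \prod_(j | P j) (Thb j y - Th j (ones K)) != 0.
  apply/prodf_neq0 => j /orP [] missj.
    by move/prodf_neq0: (miss_neq0 x Ax coef_x); apply.
  by move/prodf_neq0: (miss_neq0 x' Ax' coef_x'); apply.
rewrite (coef_centered_prod (P := P) Ax coef_x); first last.
- by move=> j jS nG; rewrite /P /miss jS nG.
- by move=> j /orP [] /andP [].
rewrite mulf_eq0 negb_or (centered_prod_neq0 vTh) // => /andP [_ /forallP missx].
move: (coef_support_incomparable Ax Ax' coef_x coef_x' nexx'); rewrite ge_onE => /negP.
apply; apply/forallP => j; apply/implyP => missj; apply: (implyP (missx j)).
by rewrite /P /miss missj orbT.
Qed.

Lemma coef_delta : exists2 x0, A x0 & forall x, A x -> coef x y = (x == x0)%:R.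
Proof.
have [x0 /andP [Ax0 coef_x0]|none] := pickP [pred x | A x && (coef x y != 0)]; last first.
  move: sum_coef; rewrite big1 => [/esym/eqP|x Ax]; first by rewrite oner_eq0.
  by move: (none x); rewrite /= Ax => /negbFE/eqP.
exists x0 => // x Ax; have [->|nexx0] := eqVneq x x0.
  move: sum_coef; rewrite (bigD1 x0) //= big1 ?addr0 // => x' /andP [Ax' nex'x0].
  apply/eqP/negPn/negP => /(coef_support_unique Ax' Ax0)/(_ coef_x0)/eqP.
  by rewrite (negbTE nex'x0).
apply/eqP/negPn/negP => /(coef_support_unique Ax Ax0)/(_ coef_x0)/eqP.
by rewrite (negbTE nexx0).
Qed.

Lemma recovery_point : exists2 x0, A x0 &
  (forall x, A x -> coef x y = (x == x0)%:R) /\ (forall j, j \notin S' -> Thb j y = Th j x0).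
Proof.
have [x0 Ax0 coefE] := coef_delta; exists x0 => //; split => // j jNS'.
have [jS|jNS] := boolP (j \in S); last first.
  by apply: coef_support_agree; rewrite ?coefE ?eqxx ?oner_neq0 // inE negb_or jNS.
have := recovery_on Ay (depends_on_coord _ jS); rewrite bern_exp_coord => ->.
rewrite (eq_bigr (fun x => Th j x * (x0 == x)%:R)) ?sum_mul_delta ?Ax0 // => x Ax.
by rewrite coefE // bern_exp_coord mulrC eq_sym.
Qed.

End FixedAlternativeClass.

Lemma recovery_map : exists sigma : pattern K -> pattern K, forall y, Ab y ->
  [/\ A (sigma y), forall x, A x -> coef x y = (x == sigma y)%:R &
      forall j, j \notin S' -> Thb j y = Th j (sigma y)].
Proof.
have point y : exists x0, Ab y -> [/\ A x0, forall x, A x -> coef x y = (x == x0)%:R &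
                                       forall j, j \notin S' -> Thb j y = Th j x0].
  have [Ay|] := boolP (Ab y); last by exists y.
  by have [x0 Ax0 [coefE ThE]] := recovery_point Ay; exists x0.
exact: fin_all_exists point.
Qed.

End Recovery.

Section Relabeling.
Variables (R : realType) (J K : nat) (Q : qmatrix J K) (E Eb : rel 'I_K).
Variables (Th Thb : 'I_J -> pattern K -> R) (p pb : pattern K -> R).
Variables (S1 S2 : {set 'I_J}) (u1 u2 : pattern K -> resp J -> R).

Local Notation A := (permissible E).
Local Notation Ab := (permissible Eb).

Hypothesis vTh : valid_theta Q E Th.
Hypothesis p_gt0 : forall x, A x -> 0 < p x.
Hypothesis pb_gt0 : forall y, Ab y -> 0 < pb y.
Hypothesis card_le : (#|[pred y | Ab y]| <= #|[pred x | A x]|)%N.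
Hypothesis disjS : [disjoint S1 & S2].
Hypothesis dual_u1 : forall x, A x -> dual_functional E Th S1 x (u1 x).
Hypothesis dual_u2 : forall x, A x -> dual_functional E Th S2 x (u2 x).
Hypothesis same_mixture : forall w,
  \sum_(x | A x) p x * bern_exp (Th^~ x) w = \sum_(y | Ab y) pb y * bern_exp (Thb^~ y) w.
Hypothesis separated : forall x x', A x -> A x' -> x != x' ->
  ge_on Q S1 x' x || ge_on Q S2 x' x ->
  exists2 j, j \notin S1 :|: S2 & Gamma Q j x != Gamma Q j x'.

Lemma relabeling : exists sigma : pattern K -> pattern K,
  [/\ (forall y, Ab y -> A (sigma y) /\ forall j, Thb j y = Th j (sigma y)),
      (forall x, A x -> p x = \sum_(y | Ab y && (sigma y == x)) pb y) &
      (forall x, A x -> exists2 y, Ab y & sigma y = x)].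
Proof.
have sep1 x x' : A x -> A x' -> x != x' -> ge_on Q S1 x' x ->
    exists2 j, j \notin S1 :|: S2 & Gamma Q j x != Gamma Q j x'.
  by move=> Ax Ax' nexx' ge1; apply: separated; rewrite ?ge1.
have sep2 x x' : A x -> A x' -> x != x' -> ge_on Q S2 x' x ->
    exists2 j, j \notin S2 :|: S1 & Gamma Q j x != Gamma Q j x'.
  by move=> Ax Ax' nexx' ge2; rewrite setUC; apply: separated; rewrite ?ge2 ?orbT.
have disjS' : [disjoint S2 & S1] by rewrite disjoint_sym.
have [sigma sigmaP] :=
  recovery_map vTh p_gt0 pb_gt0 card_le disjS dual_u1 dual_u2 same_mixture sep1.
have [tau tauP] :=
  recovery_map vTh p_gt0 pb_gt0 card_le disjS' dual_u2 dual_u1 same_mixture sep2.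
have coupling x x' : A x -> A x' ->
    \sum_(y | Ab y) pb y * (x' == tau y)%:R * (x == sigma y)%:R = (x == x')%:R * p x.
  move=> Ax Ax'.
  have := mixture_coupling disjS dual_u1 dual_u2 same_mixture Ax Ax' (depends_on_cst 1).
  rewrite bern_exp_cst mulr1 => <-; apply: eq_bigr => y Ay.
  have [_ coef1 _] := sigmaP y Ay; have [_ coef2 _] := tauP y Ay.
  by rewrite bern_exp_cst mulr1 coef1 // coef2.
have sigma_tau y : Ab y -> sigma y = tau y.
  move=> Ay; have [Asy _ _] := sigmaP y Ay; have [Aty _ _] := tauP y Ay.
  apply/eqP/negPn/negP => nest; move: (coupling _ _ Asy Aty); rewrite (negbTE nest) mul0r.
  apply/eqP; rewrite gt_eqF // (bigD1 y) //= !eqxx /= !mulr1.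
  apply: ltr_wpDr; last exact: pb_gt0.
  by apply: sumr_ge0 => z /andP [Az _]; rewrite !mulr_ge0 ?ler0n // ltW ?pb_gt0.
have fiberE x : A x -> p x = \sum_(y | Ab y && (sigma y == x)) pb y.
  move=> Ax; move: (coupling x x Ax Ax); rewrite eqxx /= mul1r => <-.
  rewrite big_mkcondr /=; apply: eq_bigr => y Ay; rewrite -sigma_tau // eq_sym.
  by case: (sigma y == x); rewrite ?mulr1n ?mulr0n ?mulr1 ?mulr0.
exists sigma; split => [y Ay|//|x Ax].
  have [Asy _ Th1] := sigmaP y Ay; have [_ _ Th2] := tauP y Ay.
  split => // j; have [jS2|jNS2] := boolP (j \in S2); last exact: Th1.
  by rewrite sigma_tau // Th2 // (disjointFl disjS jS2).
move: (p_gt0 Ax); rewrite fiberE //.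
have [y /andP [Ay /eqP <-] _|none] := pickP [pred y | Ab y && (sigma y == x)].
  by exists y.
by rewrite big_pred0 ?ltxx.
Qed.

End Relabeling.

Section Hierarchies.
Variables (K : nat) (E Eb : rel 'I_K).

Lemma eq_permissible : E =2 Eb -> permissible E =1 permissible Eb.
Proof. by move=> eqE a; apply: eq_forallb => k; apply: eq_forallb => l; rewrite eqE. Qed.

Lemma eq_lcbn_prob (R : realType) (t : 'I_K -> R) :
  E =2 Eb -> lcbn_prob E t =1 lcbn_prob Eb t.
Proof.
move=> eqE a; rewrite /lcbn_prob (eq_permissible eqE); case: ifP => // _.
by apply: eq_bigr => k _; rewrite /pik (eq_forallb (fun l => congr1 (implb^~ _) (eqE l k))).
Qed.

End Hierarchies.

(* [k -> l] is recovered from A(E) through the pattern "l and its prerequisites". *)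
Lemma hierarchy_relE (K : nat) (E : rel 'I_K) k l : is_hierarchy E ->
  E k l = (k != l) && [forall a : pattern K, permissible E a ==> (a l ==> a k)].
Proof.
move=> [irrE _ trE]; apply/idP/andP => [Ekl|[nekl /forallP /(_ [ffun m => (m == l) || E m l])]].
  split; first by apply: contraTneq Ekl => ->; rewrite (negbTE (irrE l)).
  by apply/forallP => a; apply/implyP => /forallP /(_ k) /forallP /(_ l); rewrite Ekl.
have -> : permissible E [ffun m => (m == l) || E m l].
  apply/forallP => x; apply/forallP => z; apply/implyP => Exz; rewrite !ffunE.
  by apply/implyP => /orP [/eqP <-|/(trE _ _ _ Exz) ->]; rewrite ?Exz orbT.
by rewrite /= !ffunE eqxx /= (negbTE nekl).
Qed.

Lemma eq_hierarchy (K : nat) (E Eb : rel 'I_K) : is_hierarchy E -> is_hierarchy Eb ->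
  permissible E =1 permissible Eb -> E =2 Eb.
Proof.
move=> hE hEb eqA k l; rewrite (hierarchy_relE k l hE) (hierarchy_relE k l hEb).
by congr (_ && _); apply: eq_forallb => a; rewrite eqA.
Qed.

Lemma lcbn_prob_gt0 (R : realType) (K : nat) (E : rel 'I_K) (t : 'I_K -> R) a :
  valid_t t -> permissible E a -> 0 < lcbn_prob E t a.
Proof.
move=> vt Aa; rewrite /lcbn_prob Aa; apply: prodr_gt0 => k _.
by have /andP [t_gt0 t_lt1] := vt k; case: (pik E a k); case: (a k); rewrite ?subr_gt0.
Qed.

Section LcbnParameters.
Variables (R : realType) (K : nat) (E : rel 'I_K).
Hypothesis hE : is_hierarchy E.

Definition drop_descendants (k : 'I_K) : pattern K := [ffun m => (m != k) && ~~ E k m].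

Lemma permissible_drop_descendants k : permissible E (drop_descendants k).
Proof.
have [_ _ trE] := hE; apply/forallP => x; apply/forallP => z; apply/implyP => Exz.
rewrite !ffunE; apply/implyP => /andP [nezk NEkz]; apply/andP; split.
  by apply: contraNneq NEkz => <-.
by apply: contra NEkz => /trE; apply.
Qed.

Lemma lcbn_prob_ones (t : 'I_K -> R) : lcbn_prob E t (ones K) = \prod_m t m.
Proof.
rewrite /lcbn_prob permissible_ones; apply: eq_bigr => m _.
have -> : pik E (ones K) m by apply/forallP => l; rewrite ffunE implybT.
by rewrite ffunE.
Qed.

Lemma lcbn_prob_drop_descendants (t : 'I_K -> R) k :
  lcbn_prob E t (drop_descendants k) = (1 - t k) * \prod_(m | (m != k) && ~~ E k m) t m.
Proof.
have [irrE _ trE] := hE.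
rewrite /lcbn_prob permissible_drop_descendants (bigD1 k) //=; congr (_ * _).
  have -> : pik E (drop_descendants k) k.
    apply/forallP => l; apply/implyP => Elk; rewrite ffunE; apply/andP; split.
      by apply: contraTneq Elk => ->; rewrite (negbTE (irrE k)).
    by apply: contraT; rewrite negbK => /trE /(_ Elk); rewrite (negbTE (irrE k)).
  by rewrite ffunE eqxx.
rewrite big_mkcondr /=; apply: eq_bigr => m nemk.
have [Ekm|NEkm] := boolP (E k m).
  suff -> : pik E (drop_descendants k) m = false by [].
  by apply/negbTE/negP => /forallP /(_ k); rewrite Ekm ffunE eqxx.
have -> : pik E (drop_descendants k) m.
  apply/forallP => l; apply/implyP => Elm; rewrite ffunE; apply/andP; split.
    by apply: contraNneq NEkm => <-.
  by apply: contra NEkm => /trE; apply.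
by rewrite /drop_descendants ffunE nemk NEkm.
Qed.

Lemma prod_split_descendants (t : 'I_K -> R) k :
  \prod_m t m = t k * \prod_(m | (m != k) && ~~ E k m) t m * \prod_(m | E k m) t m.
Proof.
have [irrE _ _] := hE.
rewrite (bigD1 k) //= -mulrA; congr (_ * _); rewrite (bigID (E k)) /= mulrC; congr (_ * _).
apply: eq_bigl => m; rewrite andb_idl // => Ekm.
by apply: contraTneq Ekm => ->; rewrite (negbTE (irrE k)).
Qed.

(* Strong induction on the number of descendants: comparing the full pattern
   with [drop_descendants k] isolates [t k] once the [t m] of the descendants
   [m] of [k] are known. *)
Lemma lcbn_prob_inj (t tb : 'I_K -> R) : valid_t t -> valid_t tb ->
  (forall a, permissible E a -> lcbn_prob E t a = lcbn_prob E tb a) -> t =1 tb.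
Proof.
move=> vt vtb eq_p k; have [irrE _ trE] := hE.
move: {2}#|[set m | E k m]|.+1 (ltnSn #|[set m | E k m]|) => n.
elim: n k => // n IH k; rewrite ltnS => le_desc.
have eq_desc : \prod_(m | E k m) t m = \prod_(m | E k m) tb m.
  apply: eq_bigr => m Ekm; apply: IH; apply: leq_trans le_desc; apply: proper_card.
  apply/properP; split; first by apply/subsetP => l; rewrite !inE; apply: trE.
  by exists m; rewrite !inE ?Ekm ?irrE.
pose F (u : 'I_K -> R) := \prod_(m | (m != k) && ~~ E k m) u m.
have desc_neq0 : \prod_(m | E k m) tb m != 0.
  by apply/prodf_neq0 => m _; have /andP [/lt0r_neq0] := vtb m.
have F_neq0 : F tb != 0.
  by apply/prodf_neq0 => m _; have /andP [/lt0r_neq0] := vtb m.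
have tF : t k * F t = tb k * F tb.
  have := eq_p _ (permissible_ones E); rewrite !lcbn_prob_ones !(prod_split_descendants _ k).
  by rewrite eq_desc => /(mulIf desc_neq0).
have eqF : F t = F tb.
  have := eq_p _ (permissible_drop_descendants k); rewrite !lcbn_prob_drop_descendants.
  by rewrite -/(F t) -/(F tb) !mulrBl !mul1r tF => /subIr.
by apply: (mulIf F_neq0); rewrite -[in LHS]eqF.
Qed.

End LcbnParameters.

Lemma relabeling_id (R : realType) (J K : nat) (Q : qmatrix J K) (E Eb : rel 'I_K)
    (Th Thb : 'I_J -> pattern K -> R) (S : {set 'I_J}) (sigma : pattern K -> pattern K) :
  valid_theta Q E Th -> valid_theta Q Eb Thb -> distinct_cols Q E S ->
  (forall a b, permissible E a -> ~~ permissible E b -> exists j, Gamma Q j a != Gamma Q j b) ->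
  (forall y, permissible Eb y -> permissible E (sigma y) /\ forall j, Thb j y = Th j (sigma y)) ->
  (forall x, permissible E x -> exists2 y, permissible Eb y & sigma y = x) ->
  forall y, permissible Eb y -> permissible E y /\ sigma y = y.
Proof.
move=> vTh vThb dcS separatedC sigmaP onto.
have mastery j : Thb j (ones K) = Th j (ones K).
  have [Asig Th1] := sigmaP _ (permissible_ones Eb).
  have [y0 Ay0 sy0] := onto _ (permissible_ones E).
  apply/le_anti/andP; split; first by rewrite Th1 (valid_theta_le_ones vTh).
  by rewrite -{1}sy0 -(proj2 (sigmaP y0 Ay0)) (valid_theta_le_ones vThb).
have Gamma_sigma y j : permissible Eb y -> Gamma Q j y = Gamma Q j (sigma y).
  move=> Ay; have [Asy Thy] := sigmaP y Ay.
  by rewrite (Gamma_eq_theta_ones vThb) // (Gamma_eq_theta_ones vTh) // mastery Thy.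
move=> y Ay; have [Asy _] := sigmaP y Ay.
have Ay' : permissible E y.
  by apply: contraT => NAy; have [j] := separatedC _ _ Asy NAy; rewrite (Gamma_sigma y j Ay) eqxx.
split => //; apply/eqP/negPn/negP => nesy.
by have [j _] := dcS _ _ Asy Ay' nesy; rewrite -(Gamma_sigma y j Ay) eqxx.
Qed.

Unset Implicit Arguments.

Theorem theoremS1 (R : realType) (J K : nat) (Q : qmatrix J K) (E : rel 'I_K) :
  is_hierarchy E ->
  (* (A) *)
  (exists S1 S2 : {set 'I_J},
     [/\ [disjoint S1 & S2], distinct_cols Q E S1, distinct_cols Q E S2,
         (forall a b : pattern K, permissible E a -> permissible E b ->
            ge_on Q S1 a b = ge_on Q S2 a b) &
     (* (B) *)
         (forall a b : pattern K, permissible E a -> permissible E b -> a != b ->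
            ge_on Q S1 b a || ge_on Q S2 b a ->
            exists2 j, j \notin S1 :|: S2 & Gamma Q j a != Gamma Q j b)]) ->
  (* (C) *)
  (forall a b : pattern K, permissible E a -> ~~ permissible E b ->
     exists j, Gamma Q j a != Gamma Q j b) ->
  (* strict identifiability *)
  forall (Th : 'I_J -> pattern K -> R) (t : 'I_K -> R)
         (Eb : rel 'I_K) (Thb : 'I_J -> pattern K -> R) (tb : 'I_K -> R),
    valid_theta Q E Th -> valid_t t ->
    is_hierarchy Eb -> valid_theta Q Eb Thb -> valid_t tb ->
    (#|[pred a : pattern K | permissible Eb a]| <= #|[pred a : pattern K | permissible E a]|)%N ->
    (forall r : {ffun 'I_J -> bool}, resp_prob E Th t r = resp_prob Eb Thb tb r) ->
    [/\ E =2 Eb,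
        (forall j a, permissible E a -> Th j a = Thb j a) &
        t =1 tb].
Proof.
move=> hE [S1 [S2 [disjS dcS1 dcS2 _ separated]]] separatedC Th t Eb Thb tb.
move=> vTh vt hEb vThb vtb card_le same_law.
have same_mixture w :
    \sum_(x | permissible E x) lcbn_prob E t x * bern_exp (Th^~ x) w =
    \sum_(y | permissible Eb y) lcbn_prob Eb tb y * bern_exp (Thb^~ y) w.
  by rewrite -!resp_prob_mixture; apply: eq_bigr => r _; rewrite same_law.
have [u1 dual_u1] := exists_dual_family vTh dcS1.
have [u2 dual_u2] := exists_dual_family vTh dcS2.
have [sigma [sigmaP fiberE onto]] := relabeling vTh (fun x => lcbn_prob_gt0 vt)
  (fun y => lcbn_prob_gt0 vtb) card_le disjS dual_u1 dual_u2 same_mixture separated.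
have sigma_id := relabeling_id vTh vThb dcS1 separatedC sigmaP onto.
have eqA : permissible E =1 permissible Eb.
  move=> x; apply/idP/idP => [Ax|/sigma_id [] //].
  by have [y Ay <-] := onto x Ax; have [_ ->] := sigma_id y Ay.
have eqE := eq_hierarchy hE hEb eqA.
split => // [j x Ax|].
  have Abx : permissible Eb x by rewrite -eqA.
  by have [_ ->] := sigmaP x Abx; have [_ ->] := sigma_id x Abx.
apply: (lcbn_prob_inj hE vt vtb) => x Ax; have Abx : permissible Eb x by rewrite -eqA.
rewrite fiberE // (eq_lcbn_prob tb eqE) (big_pred1 x) // => y /=.
apply/andP/eqP => [[Ay /eqP <-]|->]; first by have [_ ->] := sigma_id y Ay.
by have [_ ->] := sigma_id x Abx.
Qed.
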